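(* Let $H$ be a subgroup of finite index in a group $G$. A subset $A\subset H$ is small in $H$ if and only if $A$ is small in $G$.
   Context: A subset $L$ of a group $\Gamma$ is large in $\Gamma$ if there is a finite $F\subset\Gamma$ with $\Gamma=FL$. A subset $A\subset\Gamma$ is small in $\Gamma$ if for every large set $L\subset\Gamma$ the set $L\setminus A$ is large in $\Gamma$. *)

From Stdlib Require Import List.
Import ListNotations.

Record Group := {
  carrier :> Type;
  gmul : carrier -> carrier -> carrier;
  gone : carrier;
  ginv : carrier -> carrier;
  gmul_assoc : forall x y z, gmul x (gmul y z) = gmul (gmul x y) z;
  gmul_1l : forall x, gmul gone x = x;
  gmul_1r : forall x, gmul x gone = x;
  gmul_Vl : forall x, gmul (ginv x) x = gone;
  gmul_Vr : forall x, gmul x (ginv x) = gone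
}.

Arguments gmul {g}.
Arguments gone {g}.
Arguments ginv {g}.

Definition subset_of {G : Group} (A B : G -> Prop) : Prop := forall x, A x -> B x.

Definition is_subgroup {G : Group} (H : G -> Prop) : Prop :=
  H gone /\ (forall x y, H x -> H y -> H (gmul x y)) /\ (forall x, H x -> H (ginv x)).

(* H has finite index in G: G = F H for some finite F (finitely many left cosets). *)
Definition finite_index {G : Group} (H : G -> Prop) : Prop :=
  exists F : list G, forall g : G, exists f h, In f F /\ H h /\ g = gmul f h.

Definition large_in {G : Group} (S L : G -> Prop) : Prop :=
  exists F : list G, (forall f, In f F -> S f) /\
    forall x, S x -> exists f l, In f F /\ L l /\ x = gmul f l.

Definition small_in {G : Group} (S A : G -> Prop) : Prop :=
  forall L : G -> Prop, subset_of L S -> large_in S L ->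
    large_in S (fun x => L x /\ ~ A x).

Definition whole (G : Group) : G -> Prop := fun _ => True.

(* Going down, a G-large subset of H is H-large because the translating elements
   needed for points of H already lie in H; going up, F H = G and K L = H give
   (F K) L = G.  For the nontrivial direction, a G-large set L is pulled back to
   the H-large set L' of those h in H with h in L or f h in L for a coset
   representative f outside H.  Removing A from L' removes nothing else from L:
   f h lies outside H, hence outside A. *)

From Stdlib Require Import List Classical.
Import ListNotations.

Section Lists.
Variable G : Group.

Definition prodl (P Q : list G) : list G :=
  flat_map (fun p => map (fun q => gmul p q) Q) P.

Lemma in_prodl p q P Q : In p P -> In q Q -> In (gmul p q) (prodl P Q).
Proof.
  intros Hp Hq. apply in_flat_map. exists p. split; [exact Hp|].
  apply in_map. exact Hq.
Qed.

Lemma exists_filter_list (P : G -> Prop) (l : list G) :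
  exists l', forall x, In x l' <-> In x l /\ P x.
Proof.
  induction l as [|a l [l' IH]].
  - exists []. simpl. tauto.
  - destruct (classic (P a)) as [Ha|Ha].
    + exists (a :: l'). intros x. simpl. rewrite IH.
      split; [intros [<-|[]]|intros [[<-|Hx] Px]]; auto.
    + exists l'. intros x. simpl. rewrite IH.
      split; [intros []|intros [[<-|Hx] Px]]; auto. contradiction.
Qed.

End Lists.

Section Groups.
Variable G : Group.

Lemma gmulK (x y : G) : gmul (gmul x y) (ginv y) = x.
Proof. rewrite <- gmul_assoc, gmul_Vr, gmul_1r. reflexivity. Qed.

Lemma gmulVKl (x y z : G) : gmul (gmul x (ginv y)) (gmul y z) = gmul x z.
Proof.
  rewrite <- gmul_assoc. f_equal. rewrite gmul_assoc, gmul_Vl, gmul_1l.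
  reflexivity.
Qed.

Variable H : G -> Prop.
Hypothesis subH : is_subgroup H.

Lemma subgroup_mulr_inv (x y : G) : H (gmul x y) -> H y -> H x.
Proof.
  destruct subH as [_ [Hmul Hinv]]. intros Hxy Hy.
  rewrite <- (gmulK x y). auto.
Qed.

Lemma subgroup_notin_mul (f h : G) : ~ H f -> H h -> ~ H (gmul f h).
Proof. intros Hf Hh Hfh. exact (Hf (subgroup_mulr_inv f h Hfh Hh)). Qed.

Lemma large_whole_large_sub (M : G -> Prop) :
  subset_of M H -> large_in (whole G) M -> large_in H M.
Proof.
  intros MH [E [_ HE]].
  destruct (exists_filter_list G H E) as [E' HE'].
  exists E'. split; [intros f Hf; apply HE' in Hf; tauto|].
  intros x Hx. destruct (HE x I) as [e [m [He [Mm ->]]]].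
  exists e, m. repeat split; auto.
  apply HE'. split; [exact He|]. exact (subgroup_mulr_inv e m Hx (MH m Mm)).
Qed.

Hypothesis fiH : finite_index H.

Lemma large_sub_large_whole (M : G -> Prop) :
  large_in H M -> large_in (whole G) M.
Proof.
  destruct fiH as [F HF]. intros [K [_ HK]].
  exists (prodl G F K). split; [intros; exact I|].
  intros x _. destruct (HF x) as [f [h [Hf [Hh ->]]]].
  destruct (HK h Hh) as [k [m [Hk [Mm ->]]]].
  exists (gmul f k), m. repeat split; auto using in_prodl.
  apply gmul_assoc.
Qed.

Lemma small_whole_small_sub (A : G -> Prop) :
  small_in (whole G) A -> small_in H A.
Proof.
  intros Asmall L LH HL. apply large_whole_large_sub.
  - intros x [Lx _]. exact (LH x Lx).
  - apply Asmall; [intros x _; exact I|]. exact (large_sub_large_whole L HL).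
Qed.

Section Pullback.
Variable F : list G.
Hypothesis cosetsF : forall g : G, exists f h, In f F /\ H h /\ g = gmul f h.
Variable L : G -> Prop.

Definition pullback (h : G) : Prop :=
  H h /\ (L h \/ exists f, In f F /\ ~ H f /\ L (gmul f h)).

Lemma large_pullback : large_in (whole G) L -> large_in H pullback.
Proof.
  intros [E [_ HE]]. apply large_whole_large_sub; [intros x [Hx _]; exact Hx|].
  exists (prodl G E F ++ E). split; [intros; exact I|].
  intros x _. destruct (HE x I) as [e [l [He [Ll ->]]]].
  destruct (cosetsF l) as [f [h [Hf [Hh ->]]]].
  destruct (classic (H f)) as [Hfin|Hfout].
  - exists e, (gmul f h). repeat split; auto using in_or_app.
    destruct subH as [_ [Hmul _]]. auto.
  - exists (gmul e f), h. repeat split; auto using in_or_app, in_prodl.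
    + right. exists f. auto.
    + apply gmul_assoc.
Qed.

Lemma large_pullback_diff_large_diff (A : G -> Prop) : subset_of A H ->
  large_in (whole G) (fun h => pullback h /\ ~ A h) ->
  large_in (whole G) (fun x => L x /\ ~ A x).
Proof.
  intros AH [K [_ HK]].
  exists (prodl G K (map ginv F) ++ K). split; [intros; exact I|].
  intros x _. destruct (HK x I) as [k [h [Hk [[[Hh Lh] NAh] ->]]]].
  destruct Lh as [Lh|[f [Hf [Hfout Lfh]]]].
  - exists k, h. repeat split; auto using in_or_app.
  - exists (gmul k (ginv f)), (gmul f h). repeat split.
    + apply in_or_app. left. apply in_prodl; [exact Hk|]. apply in_map, Hf.
    + exact Lfh.
    + intros Afh. exact (subgroup_notin_mul f h Hfout Hh (AH _ Afh)).
    + symmetry. apply gmulVKl.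
Qed.
End Pullback.

Lemma small_sub_small_whole (A : G -> Prop) :
  subset_of A H -> small_in H A -> small_in (whole G) A.
Proof.
  intros AH Asmall L _ HL. destruct fiH as [F HF].
  apply (large_pullback_diff_large_diff F L A AH), large_sub_large_whole.
  apply Asmall; [intros x [Hx _]; exact Hx|]. exact (large_pullback F HF L HL).
Qed.

End Groups.

Theorem lemma5p7 (G : Group) (H : G -> Prop) (A : G -> Prop) :
  is_subgroup H -> finite_index H -> subset_of A H ->
  (small_in H A <-> small_in (whole G) A).
Proof.
  intros subH fiH AH. split.
  - exact (small_sub_small_whole G H subH fiH A AH).
  - exact (small_whole_small_sub G H subH fiH A).
Qed.
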